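(* Let $M$ be a proper $(4,4)$-map with only finitely many non-flat faces and vertices. Then the $1$-skeleton of $M$ (with its path metric) is quasi-isometric to the $1$-skeleton of a proper planar map in which every face has degree $4$ and only finitely many vertices are non-flat (have degree different from $4$).
   Context: A proper map is a tessellation of $\mathbb R^2$ by a 2-complex whose support is the whole plane and such that every disc meets only finitely many cells. Degree of a face: length of its boundary path; degree of a vertex: number of oriented edges starting there. It is a $(4,4)$-map if every face and every vertex has degree $\ge4$; a face or vertex is flat if its degree is exactly $4$, non-flat otherwise. Two metric spaces are quasi-isometric if there is a map $\phi$ between them with image coarsely dense and $-K+\frac1Ld(x,y)<d(\phi x,\phi y)<K+Ld(x,y)$ for some constants $L>1,K>0$. *)

From Stdlib Require Import Reals List Arith Relations.
Import ListNotations.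
Open Scope R_scope.

(* A combinatorial map: darts (oriented edges), an edge-reversal involution
   [alpha] without fixed points, and a bijection [sigma] giving the cyclic
   order of the darts starting at a common vertex.  Vertices are the
   sigma-orbits, faces are the orbits of [phi := sigma \o alpha]. *)
Record cmap := CMap {
  dart : Type;
  alpha : dart -> dart;
  sigma : dart -> dart;
  sigma_inv : dart -> dart;
  alpha_invol : forall d, alpha (alpha d) = d;
  alpha_nofix : forall d, alpha d <> d;
  sigma_K : forall d, sigma_inv (sigma d) = d;
  sigma_invK : forall d, sigma (sigma_inv d) = d
}.

Arguments alpha {c} d.
Arguments sigma {c} d.

Section CMapDefs.
Variable M : cmap.

Definition phi (d : dart M) : dart M := sigma (alpha d).

Definition same_vertex (d e : dart M) : Prop :=
  exists k, Nat.iter k (@sigma M) d = e.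

Definition same_face (d e : dart M) : Prop :=
  exists k, Nat.iter k phi d = e.

Definition orbit_size (f : dart M -> dart M) (d : dart M) (n : nat) : Prop :=
  (0 < n)%nat /\ Nat.iter n f d = d /\
  forall k, (0 < k < n)%nat -> Nat.iter k f d <> d.

Definition vdeg (d : dart M) (n : nat) : Prop := orbit_size (@sigma M) d n.
Definition fdeg (d : dart M) (n : nat) : Prop := orbit_size phi d n.

(* [walk x w y]: w is an edge path in the 1-skeleton from the vertex of the
   dart x to the vertex of the dart y *)
Fixpoint walk (x : dart M) (w : list (dart M)) (y : dart M) : Prop :=
  match w with
  | [] => same_vertex x y
  | d :: w' => same_vertex x d /\ walk (alpha d) w' y
  end.

Definition closed_walk (w : list (dart M)) : Prop := exists x, walk x w x.

Fixpoint face_path (d : dart M) (n : nat) : list (dart M) :=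
  match n with
  | O => []
  | S n' => d :: face_path (phi d) n'
  end.

Inductive hstep : list (dart M) -> list (dart M) -> Prop :=
  | hstep_back : forall w1 w2 d,
      closed_walk (w1 ++ [d; alpha d] ++ w2) -> closed_walk (w1 ++ w2) ->
      hstep (w1 ++ [d; alpha d] ++ w2) (w1 ++ w2)
  | hstep_face : forall w1 w2 d n,
      fdeg d n ->
      closed_walk (w1 ++ face_path d n ++ w2) -> closed_walk (w1 ++ w2) ->
      hstep (w1 ++ face_path d n ++ w2) (w1 ++ w2).

Definition simply_connected : Prop :=
  forall w, closed_walk w -> clos_refl_sym_trans _ hstep w [].

Definition connected : Prop := forall x y, exists w, walk x w y.

Definition infinite_darts : Prop := forall l : list (dart M), exists d, ~ In d l.

Definition proper_planar_map : Prop :=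
  (forall d, exists n, vdeg d n) /\
  (forall d, exists n, fdeg d n) /\
  connected /\ infinite_darts /\ simply_connected.

Definition map44 : Prop :=
  (forall d n, vdeg d n -> (4 <= n)%nat) /\
  (forall d n, fdeg d n -> (4 <= n)%nat).

Definition fin_nonflat_vertices : Prop :=
  exists l : list (dart M), forall d n, vdeg d n -> n <> 4%nat ->
    exists e, In e l /\ same_vertex e d.
Definition fin_nonflat_faces : Prop :=
  exists l : list (dart M), forall d n, fdeg d n -> n <> 4%nat ->
    exists e, In e l /\ same_face e d.

Definition all_faces_deg4 : Prop := forall d n, fdeg d n -> n = 4%nat.

Definition dist (x y : dart M) (n : nat) : Prop :=
  (exists w, walk x w y /\ length w = n) /\
  forall w, walk x w y -> (n <= length w)%nat.

End CMapDefs.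

Definition quasi_isometric (M N : cmap) : Prop :=
  exists (f : dart M -> dart N) (L K : R), 1 < L /\ 0 < K /\
    (forall x y, same_vertex M x y -> same_vertex N (f x) (f y)) /\
    (forall x y n m, dist M x y n -> dist N (f x) (f y) m ->
       - K + INR n / L < INR m /\ INR m < K + L * INR n) /\
    (exists C : R, forall y, exists x n, dist N (f x) y n /\ INR n <= C).

(* The witness is the radial map of M: its vertices are the vertices and the face
   centres of M, and its edges join each vertex to the centres of the faces around
   it, one edge per corner.  Every radial face is a quadrilateral having an edge of
   M as diagonal, and a radial vertex has the degree of the vertex or face of M it
   represents, so only finitely many radial vertices are non-flat.  An edge of M
   lifts to a detour of length 2 through an adjacent face centre; conversely a
   radial detour through a face centre is replaced by a walk around that face,
   whose length is bounded since almost all faces have degree 4.  Homotopies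
   follow the lift: a backtrack lifts to the inverse of a radial face, a face
   boundary lifts to a product of backtracks, and every closed radial walk is
   homotopic to the lift of its projection. *)

From Stdlib Require Import Rbase Lra List Arith Relations Lia Setoid.
Import ListNotations.
Open Scope nat_scope.

Lemma iter_period_mul {A} (f : A -> A) p m x :
  Nat.iter p f x = x -> Nat.iter (p * m) f x = x.
Proof.
  intros Hp; induction m as [|m IH]; [now rewrite Nat.mul_0_r|].
  now rewrite Nat.mul_succ_r, Nat.add_comm, Nat.iter_add, IH.
Qed.

Lemma iter_periodic {A} (f : A -> A) p k x :
  Nat.iter p f x = x -> Nat.iter p f (Nat.iter k f x) = Nat.iter k f x.
Proof. intros Hp. now rewrite <- Nat.iter_add, Nat.add_comm, Nat.iter_add, Hp. Qed.

Lemma iter_mod_period {A} (f : A -> A) p j x :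
  Nat.iter p f x = x -> Nat.iter j f x = Nat.iter (j mod p) f x.
Proof.
  intros Hp. replace (Nat.iter j f x) with (Nat.iter (j mod p + p * (j / p)) f x).
  - now rewrite Nat.iter_add, iter_period_mul.
  - now rewrite Nat.add_comm, <- Nat.div_mod_eq.
Qed.

Lemma iter_periodic_back {A} (f : A -> A) p k x : 0 < p -> Nat.iter p f x = x ->
  exists i, i < p /\ Nat.iter i f (Nat.iter k f x) = x.
Proof.
  intros Hp0 Hp. exists (((p - 1) * k) mod p).
  split; [apply Nat.mod_upper_bound; lia|].
  rewrite <- iter_mod_period by now apply iter_periodic.
  rewrite <- Nat.iter_add. replace ((p - 1) * k + k) with (p * k) by nia.
  now apply iter_period_mul.
Qed.

Lemma iter_inj {A} (f : A -> A) k x y :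
  (forall x y, f x = f y -> x = y) -> Nat.iter k f x = Nat.iter k f y -> x = y.
Proof. intros Hf; induction k as [|k IH]; [easy|]. intros E; apply IH, Hf, E. Qed.

Lemma orbit_size_transfer (M N : cmap) f g x y n :
  (forall k, Nat.iter k f x = x <-> Nat.iter k g y = y) ->
  orbit_size M f x n <-> orbit_size N g y n.
Proof. intros H. unfold orbit_size. now setoid_rewrite H. Qed.

Lemma orbit_size_unique (M : cmap) f d n m :
  orbit_size M f d n -> orbit_size M f d m -> n = m.
Proof.
  intros (Hn0 & Hn & Hnmin) (Hm0 & Hm & Hmmin).
  destruct (Nat.lt_total n m) as [H|[H|H]]; [|easy|].
  - now destruct (Hmmin n).
  - now destruct (Hnmin m).
Qed.

Section Walks.
Variable M : cmap.
Notation D := (dart M).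
Hypothesis vdeg_finite : forall d, exists n, vdeg M d n.

Lemma same_vertex_refl x : same_vertex M x x.
Proof. now exists 0. Qed.

Lemma same_vertex_trans x y z :
  same_vertex M x y -> same_vertex M y z -> same_vertex M x z.
Proof. intros [a Ha] [b Hb]. exists (b + a). now rewrite Nat.iter_add, Ha. Qed.

Lemma same_vertex_sigma x : same_vertex M x (sigma x).
Proof. now exists 1. Qed.

Lemma same_vertex_sym x y : same_vertex M x y -> same_vertex M y x.
Proof.
  intros [k <-]. destruct (vdeg_finite x) as [n (Hn0 & Hn & _)].
  destruct (iter_periodic_back _ n k x Hn0 Hn) as (i & _ & Hi). now exists i.
Qed.

Lemma walk_same_vertex_l x x' w y :
  same_vertex M x' x -> walk M x w y -> walk M x' w y.
Proof.
  destruct w; cbn; [apply same_vertex_trans|].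
  intros H [Hd Hw]; split; [eapply same_vertex_trans|]; eauto.
Qed.

Lemma walk_same_vertex_r x w y y' :
  walk M x w y -> same_vertex M y y' -> walk M x w y'.
Proof.
  revert x; induction w as [|d w IH]; cbn; [intros; eapply same_vertex_trans; eauto|].
  intros x [Hd Hw] H; auto.
Qed.

Lemma walk_app x u y v z : walk M x u y -> walk M y v z -> walk M x (u ++ v) z.
Proof.
  revert x; induction u as [|d u IH]; cbn; [intros; eapply walk_same_vertex_l; eauto|].
  intros x [Hd Hu] Hv; auto.
Qed.

Lemma walk_app_inv x u v z :
  walk M x (u ++ v) z -> exists y, walk M x u y /\ walk M y v z.
Proof.
  revert x; induction u as [|d u IH]; cbn.
  - intros x Hv. exists x. split; [apply same_vertex_refl|exact Hv].
  - intros x [Hd Huv]. destruct (IH _ Huv) as (y & Hu & Hv). now exists y.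
Qed.

Lemma face_path_length d n : length (face_path M d n) = n.
Proof. revert d; induction n; cbn; auto. Qed.

Lemma walk_face_path_iff x d k y :
  walk M x (face_path M d (S k)) y <->
  same_vertex M x d /\ same_vertex M (alpha (Nat.iter k (phi M) d)) y.
Proof.
  revert x d; induction k as [|k IH]; intros x d; [reflexivity|].
  change (walk M x (face_path M d (S (S k))) y) with
    (same_vertex M x d /\ walk M (alpha d) (face_path M (phi M d) (S k)) y).
  rewrite IH, Nat.iter_succ_r.
  split; [tauto|]. intros [Hx Hy]; repeat split; auto. apply same_vertex_sigma.
Qed.

Lemma face_boundary_same_vertex d k :
  Nat.iter (S k) (phi M) d = d -> same_vertex M (alpha (Nat.iter k (phi M) d)) d.
Proof. intros H; now exists 1. Qed.

Lemma walk_face_boundary x d n :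
  fdeg M d n -> same_vertex M x d -> walk M x (face_path M d n) x.
Proof.
  intros (Hn0 & Hn & _) Hx. destruct n as [|k]; [lia|].
  apply walk_face_path_iff. split; [exact Hx|].
  eapply same_vertex_trans; [now apply face_boundary_same_vertex|].
  now apply same_vertex_sym.
Qed.

Lemma walk_face_boundary_end x d n y :
  fdeg M d n -> walk M x (face_path M d n) y -> same_vertex M d y.
Proof.
  intros (Hn0 & Hn & _) Hw. destruct n as [|k]; [lia|].
  apply walk_face_path_iff in Hw as [_ Hy].
  eapply same_vertex_trans; [|exact Hy].
  now apply same_vertex_sym, face_boundary_same_vertex.
Qed.

Lemma walk_closed_rebase x v d w :
  walk M x (d :: w) x -> same_vertex M v d -> walk M v (d :: w) v.
Proof.
  intros [Hx Hw] Hv. split; [exact Hv|].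
  eapply walk_same_vertex_r; [exact Hw|].
  eapply same_vertex_trans; [exact Hx|]. now apply same_vertex_sym.
Qed.

Lemma walk_rotate x d w : walk M x (d :: w) x -> walk M (alpha d) (w ++ [d]) (alpha d).
Proof.
  intros [Hx Hw]. eapply walk_app; [exact Hw|].
  split; [exact Hx|apply same_vertex_refl].
Qed.

Definition wrev (u : list D) : list D := rev (map alpha u).

Lemma wrev_involutive u : wrev (wrev u) = u.
Proof.
  unfold wrev. rewrite map_rev, rev_involutive, map_map.
  induction u as [|d u IH]; cbn; [easy|]. now rewrite alpha_invol, IH.
Qed.

Lemma walk_wrev x u y : walk M x u y -> walk M y (wrev u) x.
Proof.
  revert x; induction u as [|d u IH]; cbn; intros x.
  - now apply same_vertex_sym.
  - intros [Hx Hu]. eapply walk_app; [exact (IH _ Hu)|].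
    split; [apply same_vertex_refl|]. cbn. rewrite alpha_invol. now apply same_vertex_sym.
Qed.

End Walks.

Section Homotopy.
Variable M : cmap.
Notation D := (dart M).
Hypothesis vdeg_finite : forall d, exists n, vdeg M d n.

Inductive red1 : list D -> list D -> Prop :=
  | red1_backtrack w1 w2 d : red1 (w1 ++ [d; alpha d] ++ w2) (w1 ++ w2)
  | red1_face w1 w2 d n : fdeg M d n -> red1 (w1 ++ face_path M d n ++ w2) (w1 ++ w2).

(* Homotopy with fixed endpoints: unlike [hstep], which only relates closed
   walks, every intermediate walk goes from [p] to [q]. *)
Definition homotopy_step p q u v := red1 u v /\ walk M p u q /\ walk M p v q.
Definition homotopic p q := clos_refl_sym_trans _ (homotopy_step p q).

Lemma homotopic_hsteps p u v :
  homotopic p p u v -> clos_refl_sym_trans _ (hstep M) u v.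
Proof.
  induction 1 as [u v (Hred & Hu & Hv)| | |]; eauto using rst_refl, rst_sym, rst_trans.
  apply rst_step. destruct Hred.
  - apply hstep_back; now exists p.
  - apply hstep_face; [|exists p..]; auto.
Qed.

Lemma red1_app c c' u v : red1 u v -> red1 (c ++ u ++ c') (c ++ v ++ c').
Proof.
  destruct 1 as [w1 w2 d|w1 w2 d n Hd].
  - pose proof (red1_backtrack (c ++ w1) (w2 ++ c') d) as H.
    rewrite <- !app_assoc in *. exact H.
  - pose proof (red1_face (c ++ w1) (w2 ++ c') d n Hd) as H.
    rewrite <- !app_assoc in *. exact H.
Qed.

Lemma homotopic_app p q r s c c' u v :
  homotopic q r u v -> walk M p c q -> walk M r c' s ->
  homotopic p s (c ++ u ++ c') (c ++ v ++ c').
Proof.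
  intros H Hc Hc'. unfold homotopic in *.
  induction H as [u v (Hred & Hu & Hv)| | |]; eauto using rst_refl, rst_sym, rst_trans.
  apply rst_step. split; [now apply red1_app|].
  split; eapply walk_app; eauto using walk_app.
Qed.

Inductive backtrack : list D -> list D -> Prop :=
  | backtrack_intro w1 w2 d : backtrack (w1 ++ [d; alpha d] ++ w2) (w1 ++ w2).

Lemma backtrack_at w1 w2 d e : e = alpha d -> backtrack (w1 ++ d :: e :: w2) (w1 ++ w2).
Proof. intros ->. apply (backtrack_intro w1 w2 d). Qed.

Lemma backtrack_walk p q u v : backtrack u v -> walk M p u q -> walk M p v q.
Proof.
  destruct 1 as [w1 w2 d]. intros Hw.
  apply walk_app_inv in Hw as (y & Hw1 & Hy & _ & Hw2).
  rewrite alpha_invol in Hw2. eauto using walk_app, walk_same_vertex_l.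
Qed.

Lemma backtracks_homotopic p q u v :
  clos_refl_trans _ backtrack u v -> walk M p u q -> homotopic p q u v.
Proof.
  intros H. apply clos_rt_rt1n in H.
  induction H as [|u v w Huv _ IH]; intros Hu; [apply rst_refl|].
  assert (Hv : walk M p v q) by (eapply backtrack_walk; eauto).
  apply rst_trans with v; [|now apply IH].
  apply rst_step. repeat split; auto. destruct Huv. constructor.
Qed.

Lemma backtracks_app c c' u v :
  clos_refl_trans _ backtrack u v ->
  clos_refl_trans _ backtrack (c ++ u ++ c') (c ++ v ++ c').
Proof.
  induction 1 as [u v [w1 w2 d]| |]; eauto using rt_refl, rt_trans.
  apply rt_step. pose proof (backtrack_intro (c ++ w1) (w2 ++ c') d) as H.
  rewrite <- !app_assoc in *. exact H.
Qed.

Lemma backtracks_app_wrev u : clos_refl_trans _ backtrack (u ++ wrev M u) [].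
Proof.
  induction u as [|d u IH]; [apply rt_refl|].
  apply rt_trans with ([d] ++ [] ++ [alpha d]).
  - replace ((d :: u) ++ wrev M (d :: u)) with ([d] ++ (u ++ wrev M u) ++ [alpha d])
      by (cbn; now rewrite <- app_assoc).
    now apply backtracks_app.
  - apply rt_step. now apply (backtrack_at [] []).
Qed.

Lemma homotopic_cancel_wrev_face p q u v d n :
  fdeg M d n -> walk M p (u ++ wrev M (face_path M d n) ++ v) q ->
  homotopic p q (u ++ wrev M (face_path M d n) ++ v) (u ++ v).
Proof.
  set (F := face_path M d n). intros Hd Hw.
  apply walk_app_inv in Hw as (y & Hu & Hw).
  apply walk_app_inv in Hw as (z & HF & Hv).
  assert (HFz : walk M z F z).
  { apply (walk_wrev M vdeg_finite) in HF. rewrite wrev_involutive in HF.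
    apply (walk_face_boundary M vdeg_finite z d n Hd).
    destruct Hd as (Hn0 & _). destruct n; [lia|]. exact (proj1 HF). }
  apply rst_trans with ((u ++ wrev M F) ++ F ++ v).
  - rewrite (app_assoc u (wrev M F) v).
    apply rst_sym, rst_step. split; [exact (red1_face (u ++ wrev M F) v d n Hd)|].
    split; eauto using walk_app.
  - apply backtracks_homotopic; [|eauto using walk_app].
    replace ((u ++ wrev M F) ++ F ++ v) with (u ++ (wrev M F ++ F) ++ v)
      by now rewrite <- !app_assoc.
    apply (backtracks_app u v _ []).
    rewrite <- (wrev_involutive M F) at 2. apply backtracks_app_wrev.
Qed.

Lemma homotopic_conj_nil p d w :
  walk M p (d :: w) p -> homotopic (alpha d) (alpha d) (w ++ [d]) [] ->
  homotopic p p (d :: w) [].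
Proof.
  intros Hw Hrot.
  assert (Hd : walk M p [d] (alpha d)) by (split; [apply Hw|apply same_vertex_refl]).
  assert (Hd' : walk M (alpha d) [alpha d] p).
  { split; [apply same_vertex_refl|]. cbn. rewrite alpha_invol.
    apply (same_vertex_sym M vdeg_finite), Hw. }
  assert (Hconj : walk M p ([d] ++ (w ++ [d]) ++ [alpha d]) p).
  { apply (walk_rotate M) in Hw. eauto using walk_app. }
  apply rst_trans with ([d] ++ (w ++ [d]) ++ [alpha d]).
  - apply rst_sym, backtracks_homotopic; [|exact Hconj].
    replace ([d] ++ (w ++ [d]) ++ [alpha d]) with ((d :: w) ++ [d; alpha d] ++ [])
      by (cbn; now rewrite <- app_assoc).
    rewrite <- (app_nil_r (d :: w)) at 2. apply rt_step, backtrack_intro.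
  - apply rst_trans with ([d] ++ [] ++ [alpha d]).
    + now apply homotopic_app with (alpha d) (alpha d).
    + apply backtracks_homotopic; [apply rt_step, (backtrack_at [] []); reflexivity|].
      eauto using walk_app.
Qed.

Lemma hstep_red1 a b : hstep M a b -> red1 a b.
Proof. destruct 1; constructor; auto. Qed.

Lemma hstep_closed a b : hstep M a b -> closed_walk M a /\ closed_walk M b.
Proof. destruct 1; auto. Qed.

Lemma hstep_nil_l b : ~ hstep M [] b.
Proof.
  intros H. apply hstep_red1 in H. remember [] as l eqn:E.
  destruct H as [w1 w2 d|w1 w2 d n (Hn0 & _)]; destruct w1; try discriminate.
  destruct n; [lia|discriminate].
Qed.

Lemma hstep_same_head a b d e a' b' :
  hstep M a b -> a = d :: a' -> b = e :: b' -> same_vertex M d e.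
Proof.
  destruct 1 as [w1 w2 d0 [z Hz] _|w1 w2 d0 n Hd0 [z Hz] _];
    (destruct w1 as [|c w1]; intros Ea Eb;
     [|injection Ea; injection Eb; intros; subst; apply same_vertex_refl]);
    cbn in Ea, Eb; subst w2.
  - injection Ea as <- _. destruct Hz as (_ & _ & Hde & _).
    now rewrite alpha_invol in Hde.
  - apply (walk_app_inv M z (face_path M d0 n)) in Hz as (y & HF & Hy & _).
    destruct Hd0 as (Hn0 & Hd0). destruct n; [lia|]. injection Ea as <- _.
    eapply same_vertex_trans; [|exact Hy].
    now apply (walk_face_boundary_end M vdeg_finite z d0 (S n)).
Qed.

Lemma closed_walk_at_iff v d w :
  closed_walk M (d :: w) -> walk M v (d :: w) v <-> same_vertex M v d.
Proof. intros [x Hx]; split; [now intros []|]. now apply walk_closed_rebase with x. Qed.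

Lemma hstep_walk_closed_iff v a b :
  hstep M a b -> b <> [] -> walk M v a v <-> walk M v b v.
Proof.
  intros H Hb.
  destruct a as [|d a']; [now apply hstep_nil_l in H|].
  destruct b as [|e b']; [easy|].
  assert (Hde := hstep_same_head _ _ d e a' b' H eq_refl eq_refl).
  destruct (hstep_closed _ _ H) as [Hca Hcb].
  rewrite !closed_walk_at_iff by assumption.
  split; intros Hv; eapply same_vertex_trans; eauto using same_vertex_sym.
Qed.

(* [simply_connected] only provides free homotopies; they are based ones because
   an elementary step keeps the base vertex of a nonempty closed walk. *)
Lemma hsteps_nil_homotopic v u :
  clos_refl_sym_trans _ (hstep M) u [] -> walk M v u v -> homotopic v v u [].
Proof.
  intros H. apply clos_rst_rst1n in H. remember [] as l eqn:E.
  induction H as [|u w l Huw _ IH]; intros Hu; [apply rst_refl|].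
  destruct u as [|d u]; [subst; apply rst_refl|].
  destruct w as [|e w].
  - subst l. destruct Huw as [Huw|Huw]; [|now apply hstep_nil_l in Huw].
    apply rst_step. split; [now apply hstep_red1|].
    split; [exact Hu|apply same_vertex_refl].
  - assert (Hw : walk M v (e :: w) v).
    { destruct Huw as [Huw|Huw]; now apply (hstep_walk_closed_iff v _ _ Huw). }
    apply rst_trans with (e :: w); [|now apply IH].
    destruct Huw as [Huw|Huw]; [|apply rst_sym]; apply rst_step;
      (split; [now apply hstep_red1|split]; assumption).
Qed.

End Homotopy.

Lemma face_period_bounded (M : cmap) :
  (forall d, exists n, fdeg M d n) -> fin_nonflat_faces M ->
  exists Dn, forall x, exists p, 0 < p <= Dn /\ Nat.iter p (phi M) x = x.
Proof.
  intros Hf [l Hl].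
  assert (Hlist : exists Dl, forall e, In e l ->
             exists p, 0 < p <= Dl /\ Nat.iter p (phi M) e = e).
  { clear Hl. induction l as [|a l [Dl IH]]; [now exists 0|].
    destruct (Hf a) as [n (Hn0 & Hn & _)]. exists (Dl + n).
    intros e [<-|He]; [exists n; split; [lia|exact Hn]|].
    destruct (IH e He) as (p & Hp & Hper). exists p. split; [lia|exact Hper]. }
  destruct Hlist as [Dl HDl]. exists (Dl + 4). intros x.
  destruct (Hf x) as [n Hn]. destruct (Nat.eq_dec n 4) as [->|Hn4].
  - exists 4. split; [lia|apply Hn].
  - destruct (Hl x n Hn Hn4) as (e & He & k & <-).
    destruct (HDl e He) as (p & Hp & Hper).
    exists p. split; [lia|now apply iter_periodic].
Qed.

Lemma quasi_isometric_of_walk_maps (M N : cmap) (f : dart M -> dart N) (a b c : nat) :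
  (forall x y, same_vertex M x y -> same_vertex N (f x) (f y)) ->
  (forall x u y, walk M x u y ->
     exists w, walk N (f x) w (f y) /\ length w <= a * length u) ->
  (forall x w y, walk N (f x) w (f y) ->
     exists u, walk M x u y /\ length u <= b * length w) ->
  (forall y, exists x n, dist N (f x) y n /\ n <= c) ->
  quasi_isometric M N.
Proof.
  intros Hsv Hfwd Hbwd Hdense. set (L := (INR (a + b) + 2)%R).
  assert (HL : (INR (a + b) + 1 < L)%R) by (unfold L; lra).
  pose proof (pos_INR (a + b)).
  exists f, L, 1%R. split; [lra|]. split; [lra|]. split; [exact Hsv|]. split.
  - intros x y n m [(u & Hu & <-) Hn] [(w & Hw & <-) Hm].
    destruct (Hfwd x u y Hu) as (w' & Hw' & Hw'len).
    destruct (Hbwd x w y Hw) as (u' & Hu' & Hu'len).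
    specialize (Hm w' Hw'). specialize (Hn u' Hu').
    assert (Hup : (INR (length w) <= INR (a + b) * INR (length u))%R)
      by (rewrite <- mult_INR; apply le_INR; nia).
    assert (Hdown : (INR (length u) <= INR (a + b) * INR (length w))%R)
      by (rewrite <- mult_INR; apply le_INR; nia).
    pose proof (pos_INR (length u)). pose proof (pos_INR (length w)).
    split; [|nra].
    assert (INR (length u) / L <= INR (length w))%R; [|lra].
    apply Rmult_le_reg_r with L; [lra|].
    unfold Rdiv. rewrite Rmult_assoc, Rinv_l, Rmult_1_r by lra. nra.
  - exists (INR c). intros y. destruct (Hdense y) as (x & n & Hxy & Hn).
    exists x, n. split; [exact Hxy|]. now apply le_INR.
Qed.

Section Radial.
Variable M : cmap.
Notation D := (dart M).

Definition tau (e : D) : D := sigma_inv M (alpha e).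

(* The radial dart (e, true) runs from the vertex of e to the centre of the
   face of alpha e, and (e, false) is its reverse; the vertex of (e, false) is
   the tau-orbit of e, which runs backwards around the face of alpha e. *)
Definition radial_alpha (p : D * bool) : D * bool := let '(e, b) := p in (e, negb b).
Definition radial_sigma (p : D * bool) : D * bool :=
  let '(e, b) := p in if b then (sigma e, true) else (tau e, false).
Definition radial_sigma_inv (p : D * bool) : D * bool :=
  let '(e, b) := p in if b then (sigma_inv M e, true) else (alpha (sigma e), false).

Lemma radial_alpha_invol p : radial_alpha (radial_alpha p) = p.
Proof. destruct p as [e b]; cbn. now rewrite Bool.negb_involutive. Qed.

Lemma radial_alpha_nofix p : radial_alpha p <> p.
Proof. destruct p as [e []]; discriminate. Qed.

Lemma radial_sigma_K p : radial_sigma_inv (radial_sigma p) = p.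
Proof.
  destruct p as [e []]; cbn; unfold tau; now rewrite ?sigma_K, ?sigma_invK, ?alpha_invol.
Qed.

Lemma radial_sigma_invK p : radial_sigma (radial_sigma_inv p) = p.
Proof.
  destruct p as [e []]; cbn; unfold tau; now rewrite ?sigma_invK, ?alpha_invol, ?sigma_K.
Qed.

Definition radial : cmap := CMap (D * bool) radial_alpha radial_sigma radial_sigma_inv
  radial_alpha_invol radial_alpha_nofix radial_sigma_K radial_sigma_invK.

Lemma radial_infinite_darts : infinite_darts M -> infinite_darts radial.
Proof.
  intros Hinf l. destruct (Hinf (map fst l)) as [d Hd]. exists (d, true).
  intros H. apply Hd. exact (in_map fst _ _ H).
Qed.

Lemma radial_iter_true k e :
  Nat.iter k (@sigma radial) (e, true) = (Nat.iter k sigma e, true).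
Proof. induction k as [|k IH]; [reflexivity|]. now rewrite !Nat.iter_succ, IH. Qed.

Lemma radial_iter_false k e :
  Nat.iter k (@sigma radial) (e, false) = (Nat.iter k tau e, false).
Proof. induction k as [|k IH]; [reflexivity|]. now rewrite !Nat.iter_succ, IH. Qed.

Lemma radial_same_vertex_true x y :
  same_vertex radial (x, true) (y, true) <-> same_vertex M x y.
Proof.
  split; intros [k Hk]; exists k; rewrite ?radial_iter_true in *; congruence.
Qed.

Lemma radial_same_vertex_false x y :
  same_vertex radial (x, false) (y, false) <-> exists k, Nat.iter k tau x = y.
Proof.
  split; intros [k Hk]; exists k; rewrite ?radial_iter_false in *; congruence.
Qed.

Lemma radial_same_vertex_flag x b p : same_vertex radial (x, b) p -> snd p = b.
Proof.
  intros [k <-]. destruct b; [rewrite radial_iter_true|rewrite radial_iter_false]; reflexivity.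
Qed.

Lemma radial_near_vertex (y : dart radial) :
  exists x n, dist radial (x, true) y n /\ n <= 1.
Proof.
  destruct y as [e []]; exists e.
  - exists 0. split; [|lia]. split; [exists []; split; [apply same_vertex_refl|easy]|lia].
  - exists 1. split; [|lia]. split.
    + exists [(e, true)]. split; [|easy]. split; apply same_vertex_refl.
    + intros [|d w] Hw; cbn; [|lia]. now apply radial_same_vertex_flag in Hw.
Qed.

Lemma radial_fdeg p : fdeg radial p 4.
Proof.
  destruct p as [e []]; (split; [lia|split]).
  - cbn. unfold tau. now rewrite !sigma_invK, !alpha_invol.
  - intros [|[|[|[|k]]]] Hk; try lia; cbn; try discriminate.
    unfold tau. rewrite sigma_invK. intros [= H]. now apply (alpha_nofix M e).
  - cbn. unfold tau. now rewrite !sigma_invK, !alpha_invol, sigma_K.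
  - intros [|[|[|[|k]]]] Hk; try lia; cbn; try discriminate.
    unfold tau. intros [= H]. apply (alpha_nofix M (sigma e)).
    rewrite <- H at 2. now rewrite sigma_invK.
Qed.

Lemma phi_inj d d' : phi M d = phi M d' -> d = d'.
Proof.
  unfold phi. intros E. apply (f_equal (sigma_inv M)) in E. rewrite !sigma_K in E.
  now rewrite <- (alpha_invol M d), E, alpha_invol.
Qed.

Lemma phi_alpha_tau e : phi M (alpha (tau e)) = alpha e.
Proof. unfold phi, tau. now rewrite alpha_invol, sigma_invK. Qed.

Lemma iter_tau_iff k e f : Nat.iter k tau e = f <-> Nat.iter k (phi M) (alpha f) = alpha e.
Proof.
  assert (Hk : Nat.iter k (phi M) (alpha (Nat.iter k tau e)) = alpha e).
  { induction k as [|k IH]; [reflexivity|].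
    change (Nat.iter (S k) tau e) with (tau (Nat.iter k tau e)).
    now rewrite Nat.iter_succ_r, phi_alpha_tau. }
  split; [now intros <-|]. intros H.
  rewrite <- H in Hk. apply iter_inj in Hk; [|exact phi_inj].
  now rewrite <- (alpha_invol M f), <- Hk, alpha_invol.
Qed.

Lemma radial_vdeg_true e n : vdeg radial (e, true) n <-> vdeg M e n.
Proof.
  apply orbit_size_transfer. intros k. rewrite radial_iter_true. split; congruence.
Qed.

Lemma radial_vdeg_false e n : vdeg radial (e, false) n <-> fdeg M (alpha e) n.
Proof.
  apply orbit_size_transfer. intros k.
  rewrite radial_iter_false, <- iter_tau_iff. split; congruence.
Qed.

Hypothesis vdeg_finite : forall d, exists n, vdeg M d n.
Hypothesis fdeg_finite : forall d, exists n, fdeg M d n.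

Lemma radial_vdeg_finite p : exists n, vdeg radial p n.
Proof.
  destruct p as [e []].
  - destruct (vdeg_finite e) as [n Hn]. exists n. now apply radial_vdeg_true.
  - destruct (fdeg_finite (alpha e)) as [n Hn]. exists n. now apply radial_vdeg_false.
Qed.

Lemma radial_fin_nonflat_vertices :
  fin_nonflat_vertices M -> fin_nonflat_faces M -> fin_nonflat_vertices radial.
Proof.
  intros [lv Hlv] [lf Hlf].
  exists (map (fun e => (e, true)) lv ++ map (fun e => (alpha e, false)) lf).
  intros [d []] n Hd Hn.
  - apply radial_vdeg_true in Hd. destruct (Hlv d n Hd Hn) as (e & He & Hed).
    exists (e, true).
    split; [apply in_or_app; left; now apply (in_map (fun e => (e, true)))|].
    now apply radial_same_vertex_true.
  - apply radial_vdeg_false in Hd. destruct (Hlf _ n Hd Hn) as (e & He & k & Hk).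
    exists (alpha e, false).
    split; [apply in_or_app; right; now apply (in_map (fun e => (alpha e, false)))|].
    apply radial_same_vertex_false.
    destruct (fdeg_finite e) as [p (Hp0 & Hp & _)].
    destruct (iter_periodic_back _ p k e Hp0 Hp) as (i & _ & Hi).
    exists i. apply iter_tau_iff. now rewrite alpha_invol, <- Hk.
Qed.

(* [lift] replaces a dart d of M by the detour through the centre of the face of d. *)
Fixpoint lift (u : list D) : list (dart radial) :=
  match u with
  | [] => []
  | d :: u' => (sigma_inv M d, true) :: (alpha d, false) :: lift u'
  end.

Lemma lift_app u v : lift (u ++ v) = lift u ++ lift v.
Proof. induction u as [|d u IH]; cbn; [easy|]. now rewrite IH. Qed.

Lemma lift_length u : length (lift u) = 2 * length u.
Proof. induction u as [|d u IH]; cbn [lift length]; [easy|]. rewrite IH. lia. Qed.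

Lemma lift_walk x u y : walk M x u y -> walk radial (x, true) (lift u) (y, true).
Proof.
  revert x; induction u as [|d u IH]; cbn; intros x; [apply radial_same_vertex_true|].
  intros [Hx Hu]. split; [|split; [|now apply IH]].
  - apply radial_same_vertex_true. eapply same_vertex_trans; [exact Hx|].
    apply (same_vertex_sym M vdeg_finite). exists 1. apply sigma_invK.
  - apply (same_vertex_sym radial radial_vdeg_finite), radial_same_vertex_false.
    exists 1. cbn. unfold tau. now rewrite alpha_invol.
Qed.

Lemma radial_connected : connected M -> connected radial.
Proof.
  intros Hcon [x b] [y b']. destruct (Hcon x y) as [u Hu].
  exists ((if b then [] else [(x, false)]) ++ lift u ++ (if b' then [] else [(y, true)])).
  eapply walk_app; [|eapply walk_app; [exact (lift_walk x u y Hu)|]].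
  - destruct b; [|split]; apply same_vertex_refl.
  - destruct b'; [|split]; apply same_vertex_refl.
Qed.

Lemma lift_backtrack d : lift [d; alpha d] = wrev radial (face_path radial (d, true) 4).
Proof. cbn. unfold tau. now rewrite !sigma_invK, !alpha_invol. Qed.

(* Consecutive detours around one face cancel, as sigma_inv (phi d) = alpha d. *)
Lemma lift_face_path d k :
  clos_refl_trans _ (backtrack radial) (lift (face_path M d (S k)))
    [(sigma_inv M d, true); (alpha (Nat.iter k (phi M) d), false)].
Proof.
  revert d; induction k as [|k IH]; intros d; [apply rt_refl|].
  change (lift (face_path M d (S (S k)))) with
    ([(sigma_inv M d, true); (alpha d, false)] ++ lift (face_path M (phi M d) (S k))).
  rewrite <- (app_nil_r (lift (face_path M (phi M d) (S k)))).
  eapply rt_trans; [apply backtracks_app, IH|].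
  rewrite Nat.iter_succ_r. unfold phi at 1. rewrite sigma_K.
  apply rt_step. now apply (backtrack_at radial [(sigma_inv M d, true)]).
Qed.

Lemma lift_face_boundary d n :
  fdeg M d n -> clos_refl_trans _ (backtrack radial) (lift (face_path M d n)) [].
Proof.
  intros (Hn0 & Hn & _). destruct n as [|k]; [lia|].
  eapply rt_trans; [apply lift_face_path|]. apply rt_step.
  replace (alpha (Nat.iter k (phi M) d)) with (sigma_inv M d)
    by (rewrite <- Hn at 1; apply sigma_K).
  now apply (backtrack_at radial [] []).
Qed.

Lemma lift_homotopy_step p q a b :
  homotopy_step M p q a b -> homotopic radial (p, true) (q, true) (lift a) (lift b).
Proof.
  intros (Hred & Ha & _). apply lift_walk in Ha.
  destruct Hred as [w1 w2 d|w1 w2 d n Hd]; rewrite !lift_app in *.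
  - rewrite lift_backtrack in *.
    apply (homotopic_cancel_wrev_face radial radial_vdeg_finite); [apply radial_fdeg|exact Ha].
  - apply backtracks_homotopic; [|exact Ha].
    apply (backtracks_app radial _ _ _ []). now apply lift_face_boundary.
Qed.

Lemma lift_homotopic p q a b :
  homotopic M p q a b -> homotopic radial (p, true) (q, true) (lift a) (lift b).
Proof.
  induction 1; [now apply lift_homotopy_step|apply rst_refl|now apply rst_sym|].
  eapply rst_trans; eassumption.
Qed.

Variable Dn : nat.
Hypothesis face_period_le : forall x, exists p, 0 < p <= Dn /\ Nat.iter p (phi M) x = x.

Lemma corner_arc e g j :
  Nat.iter j tau e = g -> exists k, S k <= Dn /\ Nat.iter k (phi M) (sigma e) = alpha g.
Proof.
  intros Hj. apply iter_tau_iff in Hj.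
  destruct (face_period_le (alpha g)) as (p & Hp & Hper).
  destruct (iter_periodic_back _ p (S j) _ (proj1 Hp) Hper) as (k & Hk & Hback).
  exists k. split; [lia|].
  rewrite Nat.iter_succ, Hj in Hback. unfold phi in Hback. now rewrite alpha_invol in Hback.
Qed.

Lemma project_corner x e g :
  same_vertex M x e -> same_vertex radial (e, false) (g, false) ->
  exists u, walk M x u g /\ length u <= Dn /\
    homotopic radial (x, true) (g, true) [(e, true); (g, false)] (lift u).
Proof.
  intros Hx Heg. apply radial_same_vertex_false in Heg as [j Hj].
  destruct (corner_arc e g j Hj) as (k & Hk & Harc).
  assert (Hu : walk M x (face_path M (sigma e) (S k)) g).
  { apply walk_face_path_iff. split.
    - eapply same_vertex_trans; [exact Hx|apply same_vertex_sigma].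
    - rewrite Harc, alpha_invol. apply same_vertex_refl. }
  exists (face_path M (sigma e) (S k)).
  split; [exact Hu|]. split; [now rewrite face_path_length|].
  apply rst_sym, backtracks_homotopic; [|now apply lift_walk].
  pose proof (lift_face_path (sigma e) k) as H.
  now rewrite sigma_K, Harc, alpha_invol in H.
Qed.

Lemma project_walk w x y :
  walk radial (x, true) w (y, true) ->
  exists u, walk M x u y /\ length u <= Dn * length w /\
    homotopic radial (x, true) (y, true) w (lift u).
Proof.
  revert x y.
  induction w as [w IH] using (well_founded_ind (well_founded_ltof _ (@length _))).
  intros x y Hw. destruct w as [|[e b] w].
  - exists []. split; [now apply radial_same_vertex_true|].
    split; [cbn; lia|apply rst_refl].
  - destruct Hw as [Hxe Hw].
    assert (Hb := radial_same_vertex_flag _ _ _ Hxe); cbn in Hb; subst b.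
    destruct w as [|[g b] w]; [now apply radial_same_vertex_flag in Hw|].
    destruct Hw as [Heg Hw].
    assert (Hb := radial_same_vertex_flag _ _ _ Heg); cbn in Hb; subst b.
    assert (Hpair : walk radial (x, true) [(e, true); (g, false)] (g, true))
      by (split; [exact Hxe|split; [exact Heg|apply same_vertex_refl]]).
    apply radial_same_vertex_true in Hxe.
    destruct (project_corner x e g Hxe Heg) as (u0 & Hu0 & Hu0len & Hhom0).
    destruct (IH w ltac:(unfold ltof; cbn; lia) g y Hw) as (u & Hu & Hulen & Hhom).
    exists (u0 ++ u). split; [eauto using walk_app|]. split.
    { rewrite length_app. cbn [length]. nia. }
    rewrite lift_app. apply rst_trans with ([(e, true); (g, false)] ++ lift u).
    + pose proof (homotopic_app radial _ _ _ _ _ [] _ _ Hhom Hpair (same_vertex_refl _ _))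
        as H.
      now rewrite !app_nil_r in H.
    + exact (homotopic_app radial _ _ _ _ [] (lift u) _ _ Hhom0
               (same_vertex_refl _ _) (lift_walk _ _ _ Hu)).
Qed.

Lemma radial_quasi_isometric : quasi_isometric M radial.
Proof.
  apply (quasi_isometric_of_walk_maps M radial (fun d => (d, true)) 2 Dn 1).
  - intros x y. apply radial_same_vertex_true.
  - intros x u y Hu. exists (lift u). rewrite lift_length. split; [now apply lift_walk|lia].
  - intros x w y Hw. destruct (project_walk w x y Hw) as (u & Hu & Hlen & _). now exists u.
  - apply radial_near_vertex.
Qed.

Hypothesis simply_connected_M : simply_connected M.

Lemma radial_loop_null c X :
  walk radial (c, true) X (c, true) -> homotopic radial (c, true) (c, true) X [].
Proof.
  intros HX. destruct (project_walk X c c HX) as (u & Hu & _ & Hhom).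
  eapply rst_trans; [exact Hhom|].
  apply (lift_homotopic c c u []), (hsteps_nil_homotopic M vdeg_finite); [|exact Hu].
  apply simply_connected_M. now exists c.
Qed.

Lemma radial_simply_connected : simply_connected radial.
Proof.
  intros w [z Hz]. destruct w as [|a w]; [apply rst_refl|].
  assert (Ha : walk radial a (a :: w) a)
    by (eapply walk_closed_rebase; eauto using radial_vdeg_finite, same_vertex_refl).
  apply (homotopic_hsteps radial a). destruct a as [c []].
  - now apply radial_loop_null.
  - (* a loop at a face centre is conjugate to a loop at a vertex of M *)
    apply (homotopic_conj_nil radial radial_vdeg_finite); [exact Ha|].
    exact (radial_loop_null c _ (walk_rotate radial _ _ _ Ha)).
Qed.

End Radial.

Theorem lemma3p3 (M : cmap) :
  proper_planar_map M -> map44 M ->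
  fin_nonflat_vertices M -> fin_nonflat_faces M ->
  exists N : cmap,
    proper_planar_map N /\ all_faces_deg4 N /\ fin_nonflat_vertices N /\
    quasi_isometric M N.
Proof.
  intros (Hv & Hf & Hcon & Hinf & Hsc) _ Hnv Hnf.
  destruct (face_period_bounded M Hf Hnf) as [Dn HDn].
  exists (radial M). split; [|split; [|split]].
  - split; [exact (radial_vdeg_finite M Hv Hf)|].
    split; [intros p; exists 4; apply radial_fdeg|].
    split; [exact (radial_connected M Hv Hf Hcon)|].
    split; [exact (radial_infinite_darts M Hinf)|].
    exact (radial_simply_connected M Hv Hf Dn HDn Hsc).
  - intros p n Hp. exact (orbit_size_unique _ _ _ _ _ Hp (radial_fdeg M p)).
  - exact (radial_fin_nonflat_vertices M Hf Hnv Hnf).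
  - exact (radial_quasi_isometric M Hv Hf Dn HDn).
Qed.
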